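(* Let $A,B$ be finite nonempty subsets of a group $G$ and put $K=\langle BB^{-1}\rangle$. Then for every integer $j\ge1$, $$|B^j|\ge\min\Big(|K|,\frac{(j+1)|B|}{2}\Big),$$ and $$|AB|\ge \min\Big(|AK|,\ |A|+\frac{|B|}{2}\Big).$$
   Context: $XY=\{xy: x\in X, y\in Y\}$ denotes the Minkowski product, $B^j$ the $j$-fold product $B\cdots B$, $BB^{-1}=\{bc^{-1}:b,c\in B\}$, and $\langle T\rangle$ the subgroup generated by $T$ (its cardinality may be infinite). *)

From Stdlib Require Import Arith List.
Import ListNotations.
Set Implicit Arguments.

Record Group := {
  carrier :> Type;
  gmul : carrier -> carrier -> carrier;
  ginv : carrier -> carrier;
  gone : carrier;
  gmulA : forall x y z, gmul x (gmul y z) = gmul (gmul x y) z;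
  gmul1l : forall x, gmul gone x = x;
  gmulVl : forall x, gmul (ginv x) x = gone
}.

Section Defs.
Variable G : Group.

Definition setmul (X Y : G -> Prop) : G -> Prop :=
  fun z => exists x y, X x /\ Y y /\ z = gmul G x y.

(* B^j = B...B (j-fold); B^0 = {1}, so B^1 = {1}B = B *)
Fixpoint setpow (B : G -> Prop) (j : nat) : G -> Prop :=
  match j with
  | 0 => fun z => z = gone G
  | S n => setmul (setpow B n) B
  end.

Definition setdiv (B : G -> Prop) : G -> Prop :=
  fun z => exists b c, B b /\ B c /\ z = gmul G b (ginv G c).

Inductive gen (T : G -> Prop) : G -> Prop :=
  | gen_one : gen T (gone G)
  | gen_in : forall x, T x -> gen T x
  | gen_mul : forall x y, gen T x -> gen T y -> gen T (gmul G x y)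
  | gen_inv : forall x, gen T x -> gen T (ginv G x).

Definition card_is (P : G -> Prop) (n : nat) : Prop :=
  exists l : list G, NoDup l /\ length l = n /\ forall x, P x <-> In x l.

Definition finite_set (P : G -> Prop) : Prop := exists n, card_is P n.
Definition nonempty (P : G -> Prop) : Prop := exists x, P x.

(* |P| <= n  (false when P is infinite) *)
Definition card_le (P : G -> Prop) (n : nat) : Prop :=
  exists m, m <= n /\ card_is P m.

End Defs.

Arguments setmul {G} X Y _.
Arguments setpow {G} B j _.
Arguments setdiv {G} B _.
Arguments gen {G} T _.
Arguments card_is {G} P n.
Arguments finite_set {G} P.
Arguments nonempty {G} P.
Arguments card_le {G} P n.

From Stdlib Require Import Arith List Lia Wf_nat Classical ClassicalEpsilon
  FunctionalExtensionality PropExtensionality.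

(* Small doubling in an arbitrary group, by Hamidoune's isoperimetric method.

   Let K be the subgroup generated by a finite set B containing 1, and let D
   be B or B^-1.  A fragment is a finite nonempty X <= K with XD <> K; its
   excess is |XD| - |X|.  Let kappa be the least excess over both choices of
   D, and call a fragment of excess kappa with minimal cardinality an atom.
   Submodularity of the excess, together with the duality X |-> K \ XD
   between fragments of B and of B^-1, shows that an atom meeting a fragment
   of excess kappa is contained in it.  Hence an atom translated to contain 1
   is a subgroup H; as B generates K, some d in D lies outside H, so H and Hd
   are disjoint inside HD, and |B| <= |HD| <= 2 (|HD| - |H|) = 2 kappa.

   For the product bound (after translating B to contain 1): if AK is not
   inside AB, pick a with aK not inside AB; the trace of A on the coset aK,
   moved into K, is a fragment, and splitting A along aK gives
   |AB| >= |A| + |B|/2.  The bound on |B^j| follows by induction on j,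
   applying the product bound with A = B^j. *)

Section Development.
Variable G : Group.
Local Notation "x * y" := (gmul G x y).
Local Notation inv := (ginv G).
Local Notation one := (gone G).
Local Notation set := (G -> Prop).

Lemma mulA x y z : x * (y * z) = (x * y) * z. Proof. apply gmulA. Qed.
Lemma mul1l x : one * x = x. Proof. apply gmul1l. Qed.
Lemma mulVl x : inv x * x = one. Proof. apply gmulVl. Qed.

Lemma mulVr x : x * inv x = one.
Proof.
  rewrite <- (mul1l (x * inv x)), <- (mulVl (inv x)) at 1.
  rewrite <- mulA, (mulA (inv x) x), mulVl, mul1l. apply mulVl.
Qed.

Lemma mul1r x : x * one = x.
Proof. rewrite <- (mulVl x), mulA, mulVr. apply mul1l. Qed.

Lemma mulK x y : inv x * (x * y) = y. Proof. rewrite mulA, mulVl. apply mul1l. Qed.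
Lemma mulKV x y : x * (inv x * y) = y. Proof. rewrite mulA, mulVr. apply mul1l. Qed.
Lemma mulVK x y : (y * inv x) * x = y. Proof. rewrite <- mulA, mulVl. apply mul1r. Qed.
Lemma mulKr x y : (y * x) * inv x = y. Proof. rewrite <- mulA, mulVr. apply mul1r. Qed.

Lemma inv_unique x y : x * y = one -> y = inv x.
Proof. intro H. rewrite <- (mulK x y), H. apply mul1r. Qed.

Lemma inv_inv x : inv (inv x) = x.
Proof. symmetry. apply inv_unique, mulVl. Qed.

Lemma inv_mul x y : inv (x * y) = inv y * inv x.
Proof. symmetry. apply inv_unique. rewrite <- mulA, (mulA y), mulVr, mul1l. apply mulVr. Qed.

Lemma inv_one : inv one = one.
Proof. symmetry. apply inv_unique, mul1l. Qed.

(* Cardinalities of finite subsets.  [card P] is the size of P when P is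
   finite, chosen by Hilbert's epsilon so that sizes can be compared freely. *)

Lemma set_ext (P Q : set) : (forall x, P x <-> Q x) -> P = Q.
Proof.
  intro H. apply functional_extensionality. intro x.
  apply propositional_extensionality, H.
Qed.

Lemma enumerate_sublist (l : list G) : forall P : set, (forall x, P x -> In x l) ->
  exists l', NoDup l' /\ length l' <= length l /\ forall x, P x <-> In x l'.
Proof.
  induction l as [|a l IH]; intros P HP.
  - exists nil. split; [constructor | split; [simpl; lia |]].
    intro x. split; [intro Px; destruct (HP x Px) | intros []].
  - destruct (IH (fun x => P x /\ x <> a)) as [l' [N [L M]]].
    { intros x [Px ne]. destruct (HP x Px); [congruence | auto]. }
    destruct (classic (P a)) as [Pa | nPa].
    + exists (a :: l'). split; [| split; [simpl; lia |]].
      * constructor; [rewrite <- M; tauto | exact N].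
      * intro x. simpl. rewrite <- M.
        destruct (classic (x = a)) as [-> | ne]; [tauto | intuition congruence].
    + exists l'. split; [exact N | split; [simpl; lia |]].
      intro x. rewrite <- M. split; [| tauto].
      intro Px. split; [exact Px | intros ->; contradiction].
Qed.

Lemma card_is_unique (P : set) n m : card_is P n -> card_is P m -> n = m.
Proof.
  intros [l1 [N1 [<- M1]]] [l2 [N2 [<- M2]]].
  apply Nat.le_antisymm; apply NoDup_incl_length; auto;
    intros x Hx; [apply M2, M1 | apply M1, M2]; exact Hx.
Qed.

Definition card (P : set) : nat := epsilon (inhabits 0) (fun n => card_is P n).

Lemma card_spec (P : set) : finite_set P -> card_is P (card P).
Proof. intro H. unfold card. apply epsilon_spec, H. Qed.

Lemma card_is_card (P : set) n : card_is P n -> finite_set P /\ card P = n.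
Proof.
  intro H. assert (F : finite_set P) by (exists n; exact H).
  split; [exact F | apply (card_is_unique P); [apply card_spec, F | exact H]].
Qed.

Lemma card_le_iff (P : set) n : card_le P n <-> finite_set P /\ card P <= n.
Proof.
  split.
  - intros [m [Lm Cm]]. destruct (card_is_card _ _ Cm) as [F E]. split; [exact F | lia].
  - intros [F L]. exists (card P). split; [exact L | apply card_spec, F].
Qed.

Lemma card_bounded_by_list (P : set) (l : list G) : (forall x, P x -> In x l) ->
  finite_set P /\ card P <= length l.
Proof.
  intro H. destruct (enumerate_sublist l P H) as [l' [N [L M]]].
  destruct (card_is_card P (length l')) as [F E]; [exists l'; auto |].
  split; [exact F | lia].
Qed.

Lemma card_sub (P Q : set) : finite_set Q -> (forall x, P x -> Q x) ->
  finite_set P /\ card P <= card Q.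
Proof.
  intros HQ S. destruct (card_spec Q HQ) as [l [_ [<- M]]].
  apply card_bounded_by_list. intros x Px. apply M, S, Px.
Qed.

Lemma sub_finite (P Q : set) : finite_set Q -> (forall x, P x -> Q x) -> finite_set P.
Proof. intros HQ S. apply (card_sub P Q HQ S). Qed.

Lemma card_ext (P Q : set) : (forall x, P x <-> Q x) -> card P = card Q.
Proof. intro H. rewrite (set_ext P Q H). reflexivity. Qed.

Lemma card_singleton x : finite_set (fun y => y = x) /\ card (fun y => y = x) = 1.
Proof.
  apply card_is_card. exists (x :: nil). split; [repeat constructor; intros [] |].
  split; [reflexivity |]. intro y. simpl. intuition.
Qed.

Lemma card_disj_union (P Q : set) : finite_set P -> finite_set Q ->
  (forall x, P x -> Q x -> False) ->
  finite_set (fun x => P x \/ Q x) /\ card (fun x => P x \/ Q x) = card P + card Q.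
Proof.
  intros HP HQ D.
  destruct (card_spec P HP) as [l1 [N1 [L1 M1]]].
  destruct (card_spec Q HQ) as [l2 [N2 [L2 M2]]].
  rewrite <- L1, <- L2, <- length_app. apply card_is_card. exists (l1 ++ l2).
  split; [| split; [reflexivity |]].
  - apply NoDup_app; auto. intros a H1 H2. apply (D a); [apply M1 | apply M2]; assumption.
  - intro x. rewrite in_app_iff, <- M1, <- M2. tauto.
Qed.

Lemma card_union (P Q : set) : finite_set P -> finite_set Q ->
  finite_set (fun x => P x \/ Q x) /\
  card (fun x => P x \/ Q x) + card (fun x => P x /\ Q x) = card P + card Q.
Proof.
  intros HP HQ.
  assert (F1 : finite_set (fun x => Q x /\ ~ P x)) by (apply (sub_finite _ Q); tauto).
  assert (F2 : finite_set (fun x => P x /\ Q x)) by (apply (sub_finite _ P); tauto).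
  destruct (card_disj_union P (fun x => Q x /\ ~ P x)) as [U1 C1]; auto; [tauto |].
  destruct (card_disj_union (fun x => P x /\ Q x) (fun x => Q x /\ ~ P x)) as [_ C2];
    auto; [tauto |].
  assert (E1 : (fun x => P x \/ Q x /\ ~ P x) = (fun x => P x \/ Q x))
    by (apply set_ext; intro x; destruct (classic (P x)); tauto).
  assert (E2 : (fun x => (P x /\ Q x) \/ Q x /\ ~ P x) = Q)
    by (apply set_ext; intro x; destruct (classic (P x)); tauto).
  rewrite E1 in U1, C1. rewrite E2 in C2. split; [exact U1 | lia].
Qed.

Lemma card_disj_sub (P Q R : set) : finite_set R -> (forall x, P x -> R x) ->
  (forall x, Q x -> R x) -> (forall x, P x -> Q x -> False) ->
  card P + card Q <= card R.
Proof.
  intros HR SP SQ D.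
  destruct (card_disj_union P Q (sub_finite P R HR SP) (sub_finite Q R HR SQ) D) as [_ <-].
  apply card_sub; [exact HR |]. intros x [H | H]; auto.
Qed.

Lemma card_strict (P Q : set) x : finite_set Q -> (forall y, P y -> Q y) ->
  Q x -> ~ P x -> card P < card Q.
Proof.
  intros HQ S Qx nPx. destruct (card_singleton x) as [_ C1].
  assert (card P + card (fun y => y = x) <= card Q) by
    (apply card_disj_sub; [exact HQ | exact S | intros y ->; exact Qx | intros y Py ->; auto]).
  lia.
Qed.

Lemma card_pos (P : set) x : finite_set P -> P x -> 1 <= card P.
Proof.
  intros HP Px. destruct (card_singleton x) as [_ C1].
  rewrite <- C1. apply card_sub; [exact HP | intros y ->; exact Px].
Qed.

Lemma card_preimage_bij (f g : G -> G) (P : set) :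
  (forall x, f (g x) = x) -> (forall x, g (f x) = x) -> finite_set P ->
  finite_set (fun z => P (f z)) /\ card (fun z => P (f z)) = card P.
Proof.
  intros fg gf HP. destruct (card_spec P HP) as [l [_ [L M]]].
  destruct (card_bounded_by_list (fun z => P (f z)) (map g l)) as [F1 C1].
  { intros z Pz. apply in_map_iff. exists (f z). split; [apply gf | apply M, Pz]. }
  destruct (card_spec _ F1) as [l' [_ [L' M']]].
  destruct (card_bounded_by_list P (map f l')) as [_ C2].
  { intros x Px. apply in_map_iff. exists (g x). split; [apply fg |].
    apply M'. rewrite fg. exact Px. }
  rewrite length_map in C1, C2. split; [exact F1 | lia].
Qed.

Lemma card_ltrans (P : set) g : finite_set P ->
  finite_set (fun z => P (g * z)) /\ card (fun z => P (g * z)) = card P.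
Proof. apply (card_preimage_bij (fun z => g * z) (fun z => inv g * z)); [apply mulKV | apply mulK]. Qed.

Lemma card_rtrans (P : set) g : finite_set P ->
  finite_set (fun z => P (z * g)) /\ card (fun z => P (z * g)) = card P.
Proof. apply (card_preimage_bij (fun z => z * g) (fun z => z * inv g)); [apply mulVK | apply mulKr]. Qed.

Lemma nat_least (P : nat -> Prop) : (exists n, P n) ->
  exists n, P n /\ forall m, P m -> n <= m.
Proof.
  intro H. destruct (dec_inh_nat_subset_has_unique_least_element P (fun n => classic (P n)) H)
    as [n [[Pn least] _]].
  exists n. split; [exact Pn | exact least].
Qed.

Lemma setmul_finite (X Y : set) : finite_set X -> finite_set Y -> finite_set (setmul X Y).
Proof.
  intros HX HY. destruct (card_spec X HX) as [l1 [_ [_ M1]]].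
  destruct (card_spec Y HY) as [l2 [_ [_ M2]]].
  apply (card_bounded_by_list _ (flat_map (fun x => map (fun y => x * y) l2) l1)).
  intros z [x [y [Xx [Yy ->]]]]. apply in_flat_map. exists x.
  split; [apply M1, Xx | apply in_map_iff; exists y; split; [reflexivity | apply M2, Yy]].
Qed.

(* |XY| >= |X| when Y is nonempty: X y0 is contained in XY. *)
Lemma card_mul_ge_l (X Y : set) : finite_set (setmul X Y) -> nonempty Y ->
  finite_set X /\ card X <= card (setmul X Y).
Proof.
  intros F [y0 Yy0]. destruct (card_rtrans (setmul X Y) y0 F) as [F' <-].
  apply card_sub; [exact F' |]. intros z Xz. exists z, y0. auto.
Qed.

(* |XY| >= |Y| when X is nonempty: x0 Y is contained in XY. *)
Lemma card_mul_ge_r (X Y : set) : finite_set (setmul X Y) -> nonempty X ->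
  finite_set Y /\ card Y <= card (setmul X Y).
Proof.
  intros F [x0 Xx0]. destruct (card_ltrans (setmul X Y) x0 F) as [F' <-].
  apply card_sub; [exact F' |]. intros z Yz. exists x0, z. auto.
Qed.

Lemma setmul_ltrans (X Y : set) g :
  setmul (fun z => X (g * z)) Y = (fun y => setmul X Y (g * y)).
Proof.
  apply set_ext. intro y. split.
  - intros [x [d [Xx [Yd ->]]]]. exists (g * x), d. rewrite mulA. auto.
  - intros [x [d [Xx [Yd E]]]]. exists (inv g * x), d.
    rewrite mulKV, <- mulA, <- E, mulK. auto.
Qed.

Lemma setmul_rtrans (X Y : set) g :
  setmul X (fun z => Y (z * g)) = (fun y => setmul X Y (y * g)).
Proof.
  apply set_ext. intro y. split.
  - intros [x [d [Xx [Yd ->]]]]. exists x, (d * g). rewrite mulA. auto.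
  - intros [x [d [Xx [Yd E]]]]. exists x, (d * inv g).
    rewrite mulVK, mulA, <- E, mulKr. auto.
Qed.

Lemma setmul_union (X Y Z : set) :
  setmul (fun z => X z \/ Y z) Z = (fun y => setmul X Z y \/ setmul Y Z y).
Proof.
  apply set_ext. intro y. split.
  - intros [x [d [[Xx | Yx] [Zd ->]]]]; [left | right]; exists x, d; auto.
  - intros [[x [d [Xx [Zd ->]]]] | [x [d [Xx [Zd ->]]]]]; exists x, d; auto.
Qed.

Lemma setmul_one_l (Y : set) : setmul (fun z => z = one) Y = Y.
Proof.
  apply set_ext. intro y. split.
  - intros [x [d [-> [Yd ->]]]]. rewrite mul1l. exact Yd.
  - intro Yy. exists one, y. rewrite mul1l. auto.
Qed.

Lemma setdiv_rtrans (B : set) g : setdiv (fun y => B (y * g)) = setdiv B.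
Proof.
  apply set_ext. intro z. split.
  - intros [b [c [Bb [Bc ->]]]]. exists (b * g), (c * g).
    rewrite inv_mul, mulA, mulKr. auto.
  - intros [b [c [Bb [Bc ->]]]]. exists (b * inv g), (c * inv g).
    rewrite !mulVK, inv_mul, inv_inv, mulA, mulVK. auto.
Qed.

Lemma gen_least (T H : set) : H one -> (forall x y, H x -> H y -> H (x * y)) ->
  (forall x, H x -> H (inv x)) -> (forall t, T t -> H t) -> forall x, gen T x -> H x.
Proof. intros H1 Hmul Hinv HT x Hx. induction Hx; auto. Qed.

Lemma gen_setdiv_contains (B : set) : B one -> forall b, B b -> gen (setdiv B) b.
Proof. intros B1 b Bb. apply gen_in. exists b, one. rewrite inv_one, mul1r. auto. Qed.

Lemma gen_setdiv_least (B H : set) : H one -> (forall x y, H x -> H y -> H (x * y)) ->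
  (forall x, H x -> H (inv x)) -> (forall b, B b -> H b) -> forall x, gen (setdiv B) x -> H x.
Proof.
  intros H1 Hmul Hinv HB. apply gen_least; auto.
  intros t [b [c [Bb [Bc ->]]]]. auto.
Qed.

Section Isoperimetry.
Variables K B : set.
Hypothesis K_mul : forall x y, K x -> K y -> K (x * y).
Hypothesis K_inv : forall x, K x -> K (inv x).
Hypothesis B_finite : finite_set B.
Hypothesis B_one : B one.
Hypothesis B_in_K : forall b, B b -> K b.
Hypothesis B_generates : forall H : set, H one -> (forall x y, H x -> H y -> H (x * y)) ->
  (forall x, H x -> H (inv x)) -> (forall b, B b -> H b) -> forall k, K k -> H k.

Definition side (s : bool) : set := if s then B else (fun x => B (inv x)).

Lemma side_one s : side s one.
Proof. destruct s; simpl; [| rewrite inv_one]; exact B_one. Qed.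

Lemma side_in_K s d : side s d -> K d.
Proof. destruct s; simpl; [auto | intro H; rewrite <- (inv_inv d); auto]. Qed.

Lemma side_generates s (H : set) : H one -> (forall x y, H x -> H y -> H (x * y)) ->
  (forall x, H x -> H (inv x)) -> (forall d, side s d -> H d) -> forall k, K k -> H k.
Proof.
  intros H1 Hmul Hinv HD. apply B_generates; auto. destruct s; simpl in HD; [exact HD |].
  intros b Bb. rewrite <- (inv_inv b). apply Hinv, HD. rewrite inv_inv. exact Bb.
Qed.

Lemma side_card s : finite_set (side s) /\ card (side s) = card B.
Proof.
  destruct s; simpl; [auto |].
  apply (card_preimage_bij inv inv); [apply inv_inv | apply inv_inv | exact B_finite].
Qed.

Lemma side_negb s d : side (negb s) d -> side s (inv d).
Proof. destruct s; simpl; [auto | rewrite inv_inv; auto]. Qed.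

Lemma mul_side_finite s (X : set) : finite_set X -> finite_set (setmul X (side s)).
Proof. intro F. apply setmul_finite; [exact F | apply side_card]. Qed.

Lemma card_le_mul_side s (X : set) : finite_set X -> card X <= card (setmul X (side s)).
Proof.
  intro F. apply card_mul_ge_l; [apply mul_side_finite, F | exists one; apply side_one].
Qed.

Lemma mul_side_in_K s (X : set) : (forall x, X x -> K x) ->
  forall y, setmul X (side s) y -> K y.
Proof. intros XK y [x [d [Xx [Dd ->]]]]. apply K_mul; [auto | apply (side_in_K s), Dd]. Qed.

Definition fragment (s : bool) (X : set) : Prop :=
  finite_set X /\ nonempty X /\ (forall x, X x -> K x) /\
  exists k, K k /\ ~ setmul X (side s) k.

Definition excess (s : bool) (X : set) : nat := card (setmul X (side s)) - card X.

Lemma fragment_translate s (X : set) g : fragment s X -> K g ->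
  fragment s (fun z => X (g * z)) /\ card (fun z => X (g * z)) = card X /\
  excess s (fun z => X (g * z)) = excess s X.
Proof.
  intros [FX [[x Xx] [XK [k [Kk nk]]]]] Kg.
  destruct (card_ltrans X g FX) as [F1 C1].
  destruct (card_ltrans (setmul X (side s)) g (mul_side_finite s X FX)) as [_ C2].
  unfold excess. rewrite setmul_ltrans. split; [| split; lia].
  split; [exact F1 | split; [exists (inv g * x); cbv beta; rewrite mulKV; exact Xx | split]].
  - intros z Xz. rewrite <- (mulK g z). auto.
  - exists (inv g * k). rewrite setmul_ltrans, mulKV. auto.
Qed.

Lemma fragment_inter s (A F : set) : fragment s A -> (exists x, A x /\ F x) ->
  fragment s (fun z => A z /\ F z).
Proof.
  intros [FA [_ [AK [k [Kk nk]]]]] meet.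
  split; [apply (sub_finite _ A FA); tauto | split; [exact meet | split]].
  - intros z [Az _]. auto.
  - exists k. split; [exact Kk |]. intros [z [d [[Az _] [Dd ->]]]]. apply nk. exists z, d. auto.
Qed.

Lemma excess_submodular s (A F : set) : finite_set A -> finite_set F ->
  excess s (fun z => A z \/ F z) + excess s (fun z => A z /\ F z) <= excess s A + excess s F.
Proof.
  intros FA FF. unfold excess. rewrite setmul_union.
  pose proof (mul_side_finite s A FA) as FAD. pose proof (mul_side_finite s F FF) as FFD.
  destruct (card_union A F FA FF) as [FU CU].
  destruct (card_union _ _ FAD FFD) as [FUD CUD].
  assert (FI : finite_set (fun z => A z /\ F z)) by (apply (sub_finite _ A FA); tauto).
  assert (CI : card (setmul (fun z => A z /\ F z) (side s)) <=
               card (fun y => setmul A (side s) y /\ setmul F (side s) y)).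
  { apply card_sub; [apply (sub_finite _ _ FAD); tauto |].
    intros y [z [d [[Az Fz] [Dd ->]]]]. split; exists z, d; auto. }
  pose proof (card_le_mul_side s _ FI).
  pose proof (card_le_mul_side s _ FU) as LU. rewrite setmul_union in LU.
  pose proof (card_le_mul_side s A FA). pose proof (card_le_mul_side s F FF).
  lia.
Qed.

Lemma dual_fragment s (F : set) : finite_set K -> fragment s F ->
  fragment (negb s) (fun y => K y /\ ~ setmul F (side s) y) /\
  excess (negb s) (fun y => K y /\ ~ setmul F (side s) y) <= excess s F.
Proof.
  intros FK [FF [[f Ff] [FinK [k [Kk nk]]]]].
  set (Fs := fun y => K y /\ ~ setmul F (side s) y).
  assert (FFs : finite_set Fs) by (apply (sub_finite _ K FK); intros y [Ky _]; exact Ky).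
  assert (avoid : forall x, F x -> ~ setmul Fs (side (negb s)) x).
  { intros x Fx [y [d [[_ ny] [Dd E]]]]. apply ny. exists x, (inv d).
    split; [exact Fx | split; [apply side_negb, Dd | rewrite E, mulKr; reflexivity]]. }
  assert (C1 : card Fs + card (setmul F (side s)) = card K).
  { destruct (card_disj_union Fs (setmul F (side s)) FFs (mul_side_finite s F FF)) as [_ <-];
      [intros y [_ ny]; exact ny |].
    apply card_ext. intro y. split.
    - intros [[Ky _] | H]; [exact Ky | apply (mul_side_in_K s F FinK), H].
    - intro Ky. unfold Fs. destruct (classic (setmul F (side s) y)); tauto. }
  assert (C2 : card (setmul Fs (side (negb s))) + card F <= card K).
  { apply card_disj_sub; [exact FK | | exact FinK | intros y H Fy; exact (avoid y Fy H)].
    apply mul_side_in_K. intros y [Ky _]. exact Ky. }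
  pose proof (card_le_mul_side (negb s) Fs FFs). unfold excess.
  split; [| lia].
  split; [exact FFs | split; [exists k; split; assumption | split]].
  - intros y [Ky _]. exact Ky.
  - exists f. split; [apply FinK, Ff | apply avoid, Ff].
Qed.

Section Atoms.
(* kappa is a lower bound for the excess of all fragments (in the end, the least excess). *)
Variable kappa : nat.
Hypothesis kappa_min : forall s X, fragment s X -> kappa <= excess s X.

Definition atom (s : bool) (A : set) : Prop :=
  fragment s A /\ excess s A = kappa /\
  forall s' Y, fragment s' Y -> excess s' Y = kappa -> card A <= card Y.

(* An atom A and a fragment F of excess kappa that meet cannot have AD u FD
   covering K: K \ FD would be a fragment of excess kappa inside AD \ (A n F)D,
   of size at most |A| - |A n F| < |A|. *)
Lemma atom_fragment_no_cover s (A F : set) : atom s A -> fragment s F -> excess s F = kappa ->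
  (exists x, A x /\ F x) -> (forall k, K k -> setmul A (side s) k \/ setmul F (side s) k) ->
  False.
Proof.
  intros [cA [vA minA]] cF vF [y Iy] cover.
  set (I := fun z => A z /\ F z).
  assert (cI : fragment s I) by (apply fragment_inter; [exact cA | exists y; exact Iy]).
  pose proof (kappa_min s I cI) as vI.
  pose proof cA as [FA _]. pose proof cF as [FF _].
  assert (FK : finite_set K).
  { apply (sub_finite _ _ (mul_side_finite s _ (proj1 (card_union A F FA FF)))).
    intros k Kk. rewrite setmul_union. auto. }
  destruct (dual_fragment s F FK cF) as [cFs vFs].
  pose proof (kappa_min _ _ cFs).
  pose proof (minA _ _ cFs ltac:(lia)) as AFs.
  assert (C : card (fun y => K y /\ ~ setmul F (side s) y) + card (setmul I (side s)) <=
              card (setmul A (side s))).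
  { apply card_disj_sub; [apply mul_side_finite, FA | | |].
    - intros z [Kz nz]. destruct (cover z Kz); tauto.
    - intros w [z [d [[Az _] [Dd ->]]]]. exists z, d. auto.
    - intros w [_ nw] [z [d [[_ Fz] [Dd ->]]]]. apply nw. exists z, d. auto. }
  pose proof (card_pos I y (proj1 cI) Iy).
  pose proof (card_le_mul_side s I (proj1 cI)). unfold excess in *. lia.
Qed.

(* An atom meeting a fragment of excess kappa is no larger than their
   intersection: either A u F is a fragment and submodularity makes A n F a
   fragment of excess kappa, or AD u FD covers K, which is impossible. *)
Lemma atom_inter_card s (A F : set) : atom s A -> fragment s F -> excess s F = kappa ->
  (exists x, A x /\ F x) -> card A <= card (fun z => A z /\ F z).
Proof.
  intros aA cF vF meet. pose proof aA as [cA [vA minA]].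
  pose proof cA as [FA [_ [AK _]]]. pose proof cF as [FF [_ [FK _]]].
  destruct (classic (exists k, K k /\ ~ setmul (fun z => A z \/ F z) (side s) k))
    as [miss | cover].
  - assert (cU : fragment s (fun z => A z \/ F z)).
    { split; [apply (card_union A F FA FF) |].
      split; [destruct meet as [y [Ay _]]; exists y; auto |].
      split; [intros z [Az | Fz]; auto | exact miss]. }
    assert (cI : fragment s (fun z => A z /\ F z)) by (apply fragment_inter; assumption).
    pose proof (kappa_min s _ cU). pose proof (kappa_min s _ cI).
    pose proof (excess_submodular s A F FA FF).
    apply (minA s); [exact cI | lia].
  - exfalso. apply (atom_fragment_no_cover s A F aA cF vF meet).
    intros k Kk. apply NNPP. intro nk.
    apply cover. exists k. rewrite setmul_union. auto.
Qed.

Lemma atom_sub s (A F : set) : atom s A -> fragment s F -> excess s F = kappa ->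
  (exists x, A x /\ F x) -> forall x, A x -> F x.
Proof.
  intros aA cF vF meet x Ax. apply NNPP. intro nFx.
  pose proof (atom_inter_card s A F aA cF vF meet).
  assert (card (fun z => A z /\ F z) < card A).
  { apply (card_strict _ _ x); [apply aA | intros z [Az _]; exact Az | exact Ax | intros [_ Fx]; auto]. }
  lia.
Qed.

Lemma atom_translate s (A : set) g : atom s A -> K g -> atom s (fun z => A (g * z)).
Proof.
  intros [cA [vA minA]] Kg. destruct (fragment_translate s A g cA Kg) as [cT [CT VT]].
  split; [exact cT | split; [lia | rewrite CT; exact minA]].
Qed.

Lemma atom_subgroup s (H : set) : atom s H -> H one ->
  (forall x y, H x -> H y -> H (x * y)) /\ (forall x, H x -> H (inv x)).
Proof.
  intros aH H1. pose proof aH as [[_ [_ [HK _]]] _].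
  assert (left_div : forall h z, H h -> H z -> H (inv h * z)).
  { intros h z Hh Hz. destruct (atom_translate s H (inv h) aH (K_inv h (HK h Hh))) as [cT [vT _]].
    apply (atom_sub s H (fun z => H (inv h * z))); auto.
    exists h. rewrite mulVl. auto. }
  assert (closed_inv : forall x, H x -> H (inv x)).
  { intros x Hx. rewrite <- (mul1r (inv x)). auto. }
  split; [| exact closed_inv].
  intros x y Hx Hy. rewrite <- (inv_inv x). auto.
Qed.

Lemma atom_excess_bound s (A : set) : atom s A -> card B <= 2 * kappa.
Proof.
  intros aA. pose proof aA as [[_ [[a0 Aa0] [AK _]]] _].
  set (H := fun z => A (a0 * z)).
  assert (aH : atom s H) by (apply atom_translate; auto).
  assert (H1 : H one) by (unfold H; rewrite mul1r; exact Aa0).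
  destruct (atom_subgroup s H aH H1) as [Hmul Hinv].
  destruct aH as [[FH [_ [_ [k [Kk nk]]]]] [vH _]].
  (* H is a proper subgroup of K, so it misses some d in the side *)
  destruct (classic (forall d, side s d -> H d)) as [all | [d nd]%not_all_ex_not].
  - exfalso. apply nk. exists k, one. rewrite mul1r.
    split; [apply (side_generates s H); assumption | split; [apply side_one | reflexivity]].
  - apply imply_to_and in nd. destruct nd as [Dd nHd].
    pose proof (mul_side_finite s H FH) as FHD.
    destruct (card_rtrans H (inv d) FH) as [_ CHd].
    assert (C1 : card H + card (fun z => H (z * inv d)) <= card (setmul H (side s))).
    { apply card_disj_sub; [exact FHD | | |].
      - intros z Hz. exists z, one. rewrite mul1r. auto using side_one.
      - intros z Hz. exists (z * inv d), d. rewrite mulVK. auto.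
      - intros z Hz Hzd. apply nHd.
        replace d with (inv (z * inv d) * z) by (rewrite inv_mul, inv_inv, <- mulA, mulVl, mul1r; reflexivity).
        auto. }
    destruct (card_mul_ge_r H (side s) FHD (ex_intro _ one H1)) as [_ C2].
    rewrite (proj2 (side_card s)) in C2. unfold excess in vH. lia.
Qed.

End Atoms.

Theorem fragment_excess_bound (X : set) : fragment true X -> card B <= 2 * excess true X.
Proof.
  intro cX.
  destruct (nat_least (fun n => exists s Y, fragment s Y /\ excess s Y = n))
    as [kappa [[s0 [Y0 [c0 v0]]] least]]; [exists (excess true X), true, X; auto |].
  assert (kappa_min : forall s Y, fragment s Y -> kappa <= excess s Y)
    by (intros s Y cY; apply least; eauto).
  destruct (nat_least (fun n => exists s Y, fragment s Y /\ excess s Y = kappa /\ card Y = n))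
    as [alpha [[s [A [cA [vA aA]]]] smallest]]; [exists (card Y0), s0, Y0; auto |].
  assert (aA' : atom kappa s A).
  { split; [exact cA | split; [exact vA |]].
    intros s' Y cY vY. rewrite aA. apply smallest. eauto. }
  pose proof (atom_excess_bound kappa kappa_min s A aA').
  pose proof (kappa_min true X cX). lia.
Qed.

End Isoperimetry.

Definition coset_trace (A K : set) (a : G) : set := fun z => A (a * z) /\ K z.

Lemma coset_split_growth (A B K : set) a :
  (forall x y, K x -> K y -> K (x * y)) -> (forall x, K x -> K (inv x)) ->
  finite_set A -> finite_set B -> B one -> (forall b, B b -> K b) ->
  card A + card (setmul (coset_trace A K a) B) <=
  card (setmul A B) + card (coset_trace A K a).
Proof.
  intros K_mul K_inv FA FB B1 BK.
  set (X := coset_trace A K a).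
  set (A1 := fun z => X (inv a * z)).
  set (A2 := fun z => A z /\ ~ K (inv a * z)).
  assert (FX : finite_set X).
  { apply (sub_finite _ _ (proj1 (card_ltrans A a FA))). intros z [Az _]. exact Az. }
  destruct (card_ltrans X (inv a) FX) as [FA1 CA1]. fold A1 in FA1, CA1.
  assert (FA2 : finite_set A2) by (apply (sub_finite _ A FA); intros z [Az _]; exact Az).
  assert (EA : card A = card A1 + card A2).
  { destruct (card_disj_union A1 A2 FA1 FA2) as [_ <-]; [intros z [_ Kz] [_ nKz]; auto |].
    apply card_ext. intro z. unfold A1, A2, X, coset_trace. rewrite mulKV.
    destruct (classic (K (inv a * z))); tauto. }
  assert (EB : card (setmul A1 B) = card (setmul X B)).
  { unfold A1. rewrite setmul_ltrans. apply card_ltrans, setmul_finite; assumption. }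
  assert (FAB : finite_set (setmul A B)) by (apply setmul_finite; assumption).
  destruct (card_mul_ge_l A2 B ltac:(apply setmul_finite; assumption) (ex_intro _ one B1))
    as [_ L2].
  assert (L3 : card (setmul A1 B) + card (setmul A2 B) <= card (setmul A B)).
  { apply card_disj_sub; [exact FAB | | |].
    - intros z [x [b [[Ax _] [Bb ->]]]]. rewrite mulKV in Ax. exists x, b. auto.
    - intros z [x [b [[Ax _] [Bb ->]]]]. exists x, b. auto.
    - (* x2 = x1 (b1 b2^-1) lies in aK whenever x1 does *)
      intros z [x1 [b1 [[_ Kx1] [Bb1 E1]]]] [x2 [b2 [[_ nK] [Bb2 E2]]]]. apply nK.
      replace x2 with (x1 * (b1 * inv b2)) by (rewrite mulA, <- E1, E2, mulKr; reflexivity).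
      rewrite mulA. auto. }
  lia.
Qed.

Lemma product_growth_one (A B : set) : finite_set A -> finite_set B -> B one ->
  card_le (setmul A (gen (setdiv B))) (card (setmul A B)) \/
  2 * card A + card B <= 2 * card (setmul A B).
Proof.
  intros FA FB B1. set (K := gen (setdiv B)).
  assert (FAB : finite_set (setmul A B)) by (apply setmul_finite; assumption).
  assert (K_mul : forall x y, K x -> K y -> K (x * y)) by (intros; apply gen_mul; auto).
  assert (K_inv : forall x, K x -> K (inv x)) by (intros; apply gen_inv; auto).
  assert (BK : forall b, B b -> K b) by (apply gen_setdiv_contains, B1).
  destruct (classic (forall y, setmul A K y -> setmul A B y)) as [inside | [y outside]%not_all_ex_not].
  - left. apply card_le_iff, card_sub; assumption.
  - right. apply imply_to_and in outside. destruct outside as [[a [k [Aa [Kk ->]]]] nAB].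
    set (X := coset_trace A K a).
    assert (cX : fragment K B true X).
    { split; [apply (sub_finite _ _ (proj1 (card_ltrans A a FA))); intros z [Az _]; exact Az |].
      split; [exists one; split; [rewrite mul1r; exact Aa | apply gen_one] |].
      split; [intros z [_ Kz]; exact Kz |].
      exists k. split; [exact Kk |]. intros [x [b [[Ax _] [Bb E]]]]. apply nAB.
      exists (a * x), b. rewrite E, mulA. auto. }
    pose proof (fragment_excess_bound K B K_mul K_inv FB B1 BK
                  (fun H => gen_setdiv_least B H) X cX) as bound.
    pose proof (coset_split_growth A B K a K_mul K_inv FA FB B1 BK) as split.
    change (coset_trace A K a) with X in split.
    destruct (card_mul_ge_l X B ltac:(apply setmul_finite; [apply cX | exact FB])
                (ex_intro _ one B1)) as [_ LX].
    unfold excess, side in bound. lia.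
Qed.

Lemma product_growth (A B : set) nA nB nAB : nonempty B ->
  card_is A nA -> card_is B nB -> card_is (setmul A B) nAB ->
  card_le (setmul A (gen (setdiv B))) nAB \/ 2 * nA + nB <= 2 * nAB.
Proof.
  intros [b0 Bb0] [FA <-]%card_is_card [FB <-]%card_is_card [FAB <-]%card_is_card.
  (* B b0^-1 contains 1, with the same size, the same BB^-1 and |A B b0^-1| = |AB| *)
  set (B' := fun y => B (y * b0)).
  destruct (card_rtrans B b0 FB) as [FB' CB'].
  destruct (card_rtrans (setmul A B) b0 FAB) as [_ CAB'].
  destruct (product_growth_one A B' FA FB' ltac:(unfold B'; rewrite mul1l; exact Bb0)) as [L | R].
  - left. unfold B' in L. rewrite setdiv_rtrans, setmul_rtrans, CAB' in L. exact L.
  - right. unfold B' in R. rewrite setmul_rtrans, CAB', CB' in R. exact R.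
Qed.

Lemma setpow_finite (B : set) j : finite_set B -> finite_set (setpow B j).
Proof.
  intro FB. induction j as [|j IH]; simpl.
  - apply (card_singleton one).
  - apply setmul_finite; assumption.
Qed.

Lemma setpow_nonempty (B : set) j : nonempty B -> nonempty (setpow B j).
Proof.
  intros [b Bb]. induction j as [|j [x Hx]]; simpl.
  - exists one. reflexivity.
  - exists (x * b), x, b. auto.
Qed.

Lemma power_growth (B : set) : finite_set B -> nonempty B -> forall j, 1 <= j ->
  card_le (gen (setdiv B)) (card (setpow B j)) \/ (j + 1) * card B <= 2 * card (setpow B j).
Proof.
  intros FB neB j. induction j as [|j IH]; intro Hj; [lia |].
  destruct (Nat.eq_dec j 0) as [-> | Hj0].
  - right. simpl. rewrite setmul_one_l. lia.
  - pose proof (setpow_finite B j FB) as Fj.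
    pose proof (setpow_finite B (S j) FB) as FSj.
    assert (grow : card (setpow B j) <= card (setpow B (S j))) by (apply card_mul_ge_l; assumption).
    destruct (product_growth (setpow B j) B _ _ _ neB (card_spec _ Fj) (card_spec _ FB)
                (card_spec _ FSj)) as [L | R].
    + (* K is as small as one of its cosets inside B^j K *)
      left. apply card_le_iff in L. destruct L as [FjK LjK].
      destruct (card_mul_ge_r _ _ FjK (setpow_nonempty B j neB)) as [FK LK].
      apply card_le_iff. split; [exact FK | lia].
    + destruct (IH ltac:(lia)) as [L' | R'].
      * left. apply card_le_iff in L'. apply card_le_iff. destruct L'. split; [assumption | lia].
      * right. lia.
Qed.

End Development.

Theorem mainTheorem10 (G : Group) (A B : G -> Prop) :
  finite_set A -> finite_set B -> nonempty A -> nonempty B ->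
  (forall (j nB nBj : nat), 1 <= j ->
     card_is B nB -> card_is (setpow B j) nBj ->
     card_le (gen (setdiv B)) nBj \/ (j + 1) * nB <= 2 * nBj) /\
  (forall nA nB nAB : nat,
     card_is A nA -> card_is B nB -> card_is (setmul A B) nAB ->
     card_le (setmul A (gen (setdiv B))) nAB \/ 2 * nA + nB <= 2 * nAB).
Proof.
  intros _ FB _ neB. split.
  - intros j nB nBj Hj [_ <-]%card_is_card [_ <-]%card_is_card.
    apply power_growth; assumption.
  - intros nA nB nAB. apply product_growth, neB.
Qed.
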